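(* Let $P$ be a finite poset, let $\overline{P}$ be its dual poset, and let $J(P)$ be the distributive lattice of lower ideals of $P$ ordered by inclusion, with the height function $\operatorname{rk}(I)=\#I$. Then $$\mathsf{Z}_{J(P),\operatorname{rk}}(1+qx)=\mathsf{L}_{\overline{P}}(x).$$
   Context: $q$ is an indeterminate; $[n]_q=(q^n-1)/(q-1)$ for $n\in\mathbb{Z}$. For a finite poset $R$ with height function $h:R\to\mathbb{N}$ (i.e. $h(x)<h(y)$ whenever $y$ covers $x$), the $q$-Zeta polynomial $\mathsf{Z}_{R,h}\in\mathbb{Q}(q)[x]$ is the unique polynomial such that $\mathsf{Z}_{R,h}([n]_q)=\sum_{e_1\le\cdots\le e_{n-1}\text{ in }R}q^{h(e_1)+\cdots+h(e_{n-1})}$ for all integers $n\ge2$ (such a polynomial exists; explicitly it is $\sum_{k\ge1}\sum_{c_1<\cdots<c_k}q^{\sum h(c_i)}\mathsf{E}_{(h(c_1),\dots,h(c_k))}((x-[k+1]_q)/q^{k+1})$, where $\mathsf{E}_a$ is the unique polynomial with $\mathsf{E}_a([n]_q)=\sum_{m\in\mathbb{N}^k,\sum m_i=n}q^{\sum a_im_i}$ for $n\ge0$). For a finite poset $R$, its order polytope is $Q_R=\{z\in\mathbb{R}^R:0\le z_p\le1\text{ for all }p,\ z_p\le z_{p'}\text{ whenever }p\le p'\}$, and its $q$-order polynomial $\mathsf{L}_R\in\mathbb{Q}(q)[x]$ is the unique polynomial with $\mathsf{L}_R([n]_q)=\sum_{z\in nQ_R\cap\mathbb{Z}^R}q^{\sum_{p}z_p}$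 for all $n\ge0$. *)

From HB Require Import structures.
From mathcomp Require Import all_boot all_order all_algebra.
Set Implicit Arguments. Unset Strict Implicit. Unset Printing Implicit Defensive.
Import Order.TTheory GRing.Theory.
Local Open Scope ring_scope.

Definition Qq : fieldType := {fraction {poly rat}}.
Definition qq : Qq := FracField.tofrac ('X : {poly rat}).

Definition qint (n : nat) : Qq := (qq ^+ n - 1) / (qq - 1).

Definition is_qZeta (T : finType) (le : rel T) (h : T -> nat) (Z : {poly Qq}) :=
  forall n : nat, (2 <= n)%N ->
    Z.[qint n] = \sum_(e : (n.-1).-tuple T | sorted le e) qq ^+ (\sum_(x <- e) h x).

(* L is the q-order polynomial of the finite poset (T, le):
   L([n]_q) = sum over lattice points z of n Q_T (i.e. order-preserving
   z : T -> {0,...,n}) of q^(sum_p z_p), for all n >= 0. *)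
Definition is_qOrder (T : finType) (le : rel T) (L : {poly Qq}) :=
  forall n : nat,
    L.[qint n] = \sum_(z : {ffun T -> 'I_n.+1} |
                        [forall p, forall p', le p p' ==> (z p <= z p')%N])
                   qq ^+ (\sum_p (z p : nat)).

Definition is_lower_ideal (d : Order.disp_t) (P : finPOrderType d) (I : {set P}) : bool :=
  [forall x, forall y, (x \in I) && (y <= x)%O ==> (y \in I)].

Definition JP (d : Order.disp_t) (P : finPOrderType d) : finType :=
  {I : {set P} | is_lower_ideal I}.

Definition JP_le (d : Order.disp_t) (P : finPOrderType d) : rel (JP P) :=
  fun I J => (val I \subset val J).

Definition JP_rk (d : Order.disp_t) (P : finPOrderType d) (I : JP P) : nat := #|val I|.

(* Recording, for a multichain I_1 <= ... <= I_n of lower ideals, how many I_i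
   contain each p is a bijection onto the order-reversing maps P -> {0..n}, i.e.
   the lattice points of n Q_(P^d), and it carries sum rk I_i to sum z_p.  So both
   q-polynomials count the same weighted objects, Z at [n+1]_q = 1 + q [n]_q and L
   at [n]_q.  These counts are polynomials in q^n = 1 + (q - 1)[n]_q: the sum M_I(n)
   over multichains above I satisfies
     M_I(n+1) = q^(rk I) M_I(n) + sum_(J > I) q^(rk J) M_J(n),
   which is solved by descending induction on I.  Uniqueness holds because the
   [n]_q are pairwise distinct. *)

From HB Require Import structures.
From mathcomp Require Import all_boot all_order all_algebra.
From mathcomp Require Import ring zify.
Import Order.TTheory GRing.Theory.
Set Implicit Arguments. Unset Strict Implicit. Unset Printing Implicit Defensive.
Local Open Scope ring_scope.

Lemma expr_qq_inj : injective (GRing.exp qq).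
Proof.
move=> i j; rewrite /qq -!tofracXn => /eqP; rewrite tofrac_eq => /eqP eq_ij.
have := congr1 (fun p : {poly rat} => size p) eq_ij.
by rewrite /= !size_polyXn => -[].
Qed.

Lemma expr_qq_sub_neq0 i j : i != j -> qq ^+ i - qq ^+ j != 0.
Proof. by apply: contraNneq => /subr0_eq /expr_qq_inj ->. Qed.

Lemma qq_neq0 : qq != 0.
Proof. by rewrite /qq tofrac_eq0 polyX_eq0. Qed.

Lemma qq_sub1_neq0 : qq - 1 != 0.
Proof. by rewrite /qq -tofrac1 -tofracB tofrac_eq0 -polyC1 polyXsubC_eq0. Qed.

Lemma mul_qq_sub1_qint n : (qq - 1) * qint n = qq ^+ n - 1.
Proof. by rewrite /qint mulrC divfK // qq_sub1_neq0. Qed.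

Lemma expr_qqE n : qq ^+ n = 1 + (qq - 1) * qint n.
Proof. by rewrite mul_qq_sub1_qint addrC subrK. Qed.

Lemma qintS n : qint n.+1 = 1 + qq * qint n.
Proof.
apply: (mulfI qq_sub1_neq0); rewrite mul_qq_sub1_qint mulrDr mulr1 mulrCA mul_qq_sub1_qint exprS.
ring.
Qed.

Lemma qint_inj : injective qint.
Proof. by move=> i j eq_ij; apply: expr_qq_inj; rewrite !expr_qqE eq_ij. Qed.

Lemma horner_comp_qint (Z : {poly Qq}) n : (Z \Po (1 + qq *: 'X)).[qint n] = Z.[qint n.+1].
Proof. by rewrite horner_comp hornerD hornerC hornerZ hornerX qintS. Qed.

Lemma inj_roots_poly_eq0 (R : idomainType) (p : {poly R}) (f : nat -> R) :
  injective f -> (forall n, root p (f n)) -> p = 0.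
Proof.
move=> f_inj p_f; apply: (@roots_geq_poly_eq0 _ _ (map f (iota 0 (size p)))).
- by apply/allP => _ /mapP[n _ ->].
- by rewrite map_inj_uniq ?iota_uniq.
- by rewrite size_map size_iota.
Qed.

Definition qexp_repr (a : nat) (f : nat -> Qq) (p : {poly Qq}) : Prop :=
  (forall j, (j < a)%N -> p`_j = 0) /\ forall n, f n = p.[qq ^+ n].

(* [D] solves [D(q x) = q^a D(x) + B(x)] coefficientwise, which needs [B_a = 0];
   what remains of [f] is then geometric of ratio [q^a]. *)
Lemma qexp_repr_rec (a : nat) (B : {poly Qq}) (f : nat -> Qq) :
    (forall j, (j <= a)%N -> B`_j = 0) ->
    (forall n, f n.+1 = qq ^+ a * f n + B.[qq ^+ n]) ->
  exists C, qexp_repr a f C.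
Proof.
move=> B_low f_rec.
pose D := \poly_(j < size B) (B`_j / (qq ^+ j - qq ^+ a)).
have D_low j : (j <= a)%N -> D`_j = 0.
  by move=> ja; rewrite coef_poly B_low // mul0r if_same.
have D_shift x : D.[qq * x] = qq ^+ a * D.[x] + B.[x].
  rewrite !horner_poly [B.[x]]horner_coef mulr_sumr -big_split /=.
  apply: eq_bigr => j _; have [ja|/expr_qq_sub_neq0 nz] := eqVneq (val j) a.
    by rewrite B_low ?ja // !mul0r mulr0 add0r.
  set dj := B`_j / _; have -> : B`_j = dj * (qq ^+ j - qq ^+ a) by rewrite divfK.
  rewrite exprMn; ring.
pose g n := f n - D.[qq ^+ n].
have g_geom n : g n = g 0%N * qq ^+ (a * n).
  elim: n => [|n IHn]; first by rewrite muln0 mulr1.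
  have -> : g n.+1 = qq ^+ a * g n by rewrite /g f_rec exprS D_shift; ring.
  by rewrite IHn mulnS exprD; ring.
exists (D + g 0%N *: 'X^a); split=> [j ja|n].
  by rewrite coefD coefZ coefXn D_low ?(ltnW ja) // ltn_eqF // mulr0 addr0.
by rewrite hornerD hornerZ hornerXn -exprM mulnC -g_geom /g addrC subrK.
Qed.

Lemma big_tuple_cons (R : Type) (idx : R) (op : Monoid.com_law idx)
    (T : finType) n (F : n.+1.-tuple T -> R) :
  \big[op/idx]_(t : n.+1.-tuple T) F t =
  \big[op/idx]_(x : T) \big[op/idx]_(t : n.-tuple T) F (cons_tuple x t).
Proof.
rewrite pair_big (reindex (fun p : T * n.-tuple T => cons_tuple p.1 p.2)) //=.
exists (fun t : n.+1.-tuple T => (thead t, behead_tuple t)).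
  by move=> [x t] _; congr (_, _); apply: val_inj.
by move=> t _; apply: val_inj; rewrite /= [in RHS](tuple_eta t).
Qed.

Section MultichainSums.

Variables (T : finType) (le : rel T) (h : T -> nat).
Hypothesis le_refl : reflexive le.
Hypothesis h_lt : forall x y, le x y -> x != y -> (h x < h y)%N.

Definition multichain_sum (x : T) (n : nat) : Qq :=
  \sum_(t : n.-tuple T | path le x t) qq ^+ (\sum_(y <- t) h y).

Lemma multichain_sumS x n :
  multichain_sum x n.+1 = \sum_(y | le x y) qq ^+ h y * multichain_sum y n.
Proof.
rewrite /multichain_sum big_mkcond big_tuple_cons [RHS]big_mkcond /=.
apply: eq_bigr => y _; case: ifP => [le_xy | _]; last exact: big1.
rewrite mulr_sumr big_mkcond [RHS]big_mkcond /=; apply: eq_bigr => t _.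
by case: ifP => // _; rewrite big_cons exprD.
Qed.

Lemma multichain_sum_qexp x : exists p, qexp_repr (h x) (multichain_sum x) p.
Proof.
pose hmax := (\max_y h y)%N.
suff: forall k x, (hmax - h x < k)%N -> exists p, qexp_repr (h x) (multichain_sum x) p.
  by apply; exact: ltnSn.
elim=> // k IHk {}x x_k.
have above y : exists p, le x y && (y != x) -> qexp_repr (h y) (multichain_sum y) p.
  have [/andP[le_xy neq_yx]|_] := boolP (le x y && (y != x)); last by exists 0.
  have lt_xy : (h x < h y)%N by apply: h_lt; rewrite // eq_sym.
  have [|p p_repr] := IHk y; last by exists p.
  have : (h y <= hmax)%N by exact: leq_bigmax.
  lia.
have [pa pa_repr] := fin_all_exists above.
apply: (@qexp_repr_rec (h x) (\sum_(y | le x y && (y != x)) qq ^+ h y *: pa y)).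
- move=> j le_jx; rewrite coef_sum big1 // => y above_y.
  have [pa_low _] := pa_repr y above_y.
  rewrite coefZ pa_low ?mulr0 //; apply: leq_ltn_trans le_jx _.
  by case/andP: above_y => le_xy neq_yx; apply: h_lt; rewrite // eq_sym.
- move=> n; rewrite multichain_sumS (bigD1 x) //= horner_sum; congr (_ + _).
  by apply: eq_bigr => y above_y; have [_ ->] := pa_repr y above_y; rewrite hornerZ.
Qed.

End MultichainSums.

Lemma count_iota_subn_leq n c :
  (c <= n)%N -> count (fun i => n - i <= c)%N (iota 0 n) = c.
Proof.
move=> le_cn; have := count_predC (fun i => i < n - c)%N (iota 0 n).
have := filter_iota_ltn 0 (leq_subr c n); rewrite add0n => filter_lt.
rewrite -size_filter filter_lt !size_iota.
rewrite (@eq_in_count _ (predC _) (fun i => n - i <= c)%N) => [count_n|i].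
  by apply/eqP; rewrite -(eqn_add2l (n - c)) count_n subnK.
by rewrite mem_iota => /andP[_ lt_in] /=; apply/negP/idP; lia.
Qed.

Lemma nth_sorted_implb (b : seq bool) i :
  sorted implb b -> (i < size b)%N -> nth false b i = (size b - i <= count id b)%N.
Proof.
elim: b i => [|x b IHb] i //= b_sorted lt_i.
case: x b_sorted => b_sorted; last first.
  case: i lt_i => [|i] lt_i /=; first by rewrite ltnNge count_size.
  by rewrite subSS IHb // (path_sorted b_sorted).
have b_true : all id b.
  by apply: sub_all (order_path_min _ b_sorted) => // [[] [] []].
have -> : count id b = size b by apply/eqP; rewrite -all_count.
case: i lt_i => [|i] lt_i /=; first by rewrite leqnn.
by rewrite (all_nthP false b_true) //; apply/esym/idP; lia.
Qed.

Section LowerIdeals.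

Variables (d : Order.disp_t) (P : finPOrderType d).
Local Notation J := (JP P).
Local Notation le := (@JP_le d P).
Local Notation rk := (@JP_rk d P).

Lemma JP_le_refl : reflexive le.
Proof. by move=> I; rewrite /JP_le subxx. Qed.

Lemma JP_rk_lt I I' : le I I' -> I != I' -> (rk I < rk I')%N.
Proof.
move=> le_II' neq_II'; apply: proper_card; rewrite properEneq andbC.
by rewrite [_ \subset _]le_II' (inj_eq val_inj).
Qed.

Lemma set0_lower_ideal : is_lower_ideal (set0 : {set P}).
Proof. by apply/forallP => x; apply/forallP => y; rewrite inE. Qed.

Definition ideal0 : J := exist _ set0 set0_lower_ideal.

Lemma path_ideal0 (t : seq J) : path le ideal0 t = sorted le t.
Proof. by case: t => [|I t] //=; rewrite /JP_le sub0set. Qed.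

Definition order_preserving n (z : {ffun P^d -> 'I_n.+1}) : bool :=
  [forall p, forall p', (<=%O : rel P^d) p p' ==> (z p <= z p')%N].

Definition occurrence_map n (t : n.-tuple J) : {ffun P^d -> 'I_n.+1} :=
  [ffun p : P^d => inord (count (fun I : J => (p : P) \in val I) t)].

Definition superlevel_ideal n (z : {ffun P^d -> 'I_n.+1}) (k : nat) : J :=
  insubd ideal0 [set p : P | (k <= z p)%N].

Definition superlevel_chain n (z : {ffun P^d -> 'I_n.+1}) : n.-tuple J :=
  [tuple superlevel_ideal z (n - i) | i < n].

Lemma occurrence_mapE n (t : n.-tuple J) p :
  occurrence_map t p = count (fun I : J => (p : P) \in val I) t :> nat.
Proof. by rewrite ffunE inordK // ltnS -[X in (_ <= X)%N](size_tuple t) count_size. Qed.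

Lemma occurrence_map_order_preserving n (t : n.-tuple J) :
  order_preserving (occurrence_map t).
Proof.
apply/forallP => p; apply/forallP => p'; apply/implyP; rewrite leEdual => le_p'p.
rewrite !occurrence_mapE; apply: sub_count => I /= p_I.
by move/forallP: (valP I) => /(_ p) /forallP /(_ p') /implyP; apply; rewrite p_I.
Qed.

Lemma superlevel_idealE n (z : {ffun P^d -> 'I_n.+1}) k :
  order_preserving z -> val (superlevel_ideal z k) = [set p : P | (k <= z p)%N].
Proof.
move=> z_mono; rewrite /superlevel_ideal insubdK //.
apply/forallP => p; apply/forallP => p'; apply/implyP; rewrite !inE => /andP[k_p le_p'p].
move/forallP: z_mono => /(_ p) /forallP /(_ p') /implyP /(_ le_p'p).
exact: leq_trans k_p.
Qed.

Lemma occurrence_mapK n (z : {ffun P^d -> 'I_n.+1}) :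
  order_preserving z -> occurrence_map (superlevel_chain z) = z.
Proof.
move=> z_mono; apply/ffunP => p; apply: ord_inj; rewrite occurrence_mapE /=.
rewrite count_map (eq_count (a2 := preim val (fun i => n - i <= z p)%N)) => [|i].
  by rewrite -count_map val_enum_ord count_iota_subn_leq // -ltnS.
by rewrite /= superlevel_idealE // inE.
Qed.

Lemma superlevel_chain_sorted n (z : {ffun P^d -> 'I_n.+1}) :
  order_preserving z -> sorted le (superlevel_chain z).
Proof.
move=> z_mono; have: sorted (relpre val ltn) (enum 'I_n).
  by rewrite -sorted_map val_enum_ord iota_ltn_sorted.
apply: homo_sorted => i j lt_ij; rewrite /JP_le !superlevel_idealE //.
by apply/subsetP => p; rewrite !inE; apply: leq_trans; rewrite /= in lt_ij; lia.
Qed.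

Lemma superlevel_chainK n (t : n.-tuple J) :
  sorted le t -> superlevel_chain (occurrence_map t) = t.
Proof.
move=> t_sorted; apply: eq_from_tnth => i; apply: val_inj.
rewrite tnth_mktuple superlevel_idealE ?occurrence_map_order_preserving //.
apply/setP => p; rewrite inE occurrence_mapE (tnth_nth ideal0).
have := @nth_sorted_implb (map (fun I : J => (p : P) \in val I) t) i.
rewrite size_map size_tuple count_map (nth_map ideal0) ?size_tuple // => -> //.
by apply: homo_sorted t_sorted => I I' /subsetP sub_II'; apply/implyP; exact: sub_II'.
Qed.

Lemma occurrence_map_weight n (t : n.-tuple J) :
  (\sum_(p : P^d) (occurrence_map t p : nat))%N = (\sum_(I <- t) rk I)%N.
Proof.
rewrite (eq_bigr (fun p : P^d => \sum_(I <- t) ((p : P) \in val I : nat))%N).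
  rewrite exchange_big /=; apply: eq_bigr => I _.
  by rewrite /JP_rk -sum1_card [RHS]big_mkcond; apply: eq_bigr => p _; case: (_ \in _).
by move=> p _; rewrite occurrence_mapE -sum1_count big_mkcond.
Qed.

Lemma order_preserving_sum n :
  \sum_(z : {ffun P^d -> 'I_n.+1} | order_preserving z) qq ^+ (\sum_p (z p : nat)) =
  \sum_(t : n.-tuple J | sorted le t) qq ^+ (\sum_(I <- t) rk I).
Proof.
rewrite (reindex_onto (@occurrence_map n) (@superlevel_chain n)) => [|z z_mono]; last first.
  exact: occurrence_mapK.
apply: eq_big => [t|t _]; last by rewrite occurrence_map_weight.
rewrite occurrence_map_order_preserving /=; apply/eqP/idP => [<-|]; last exact: superlevel_chainK.
exact/superlevel_chain_sorted/occurrence_map_order_preserving.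
Qed.

End LowerIdeals.

Theorem mainTheorem3 (d : Order.disp_t) (P : finPOrderType d) :
  (exists Z : {poly Qq}, is_qZeta (@JP_le d P) (@JP_rk d P) Z) /\
  (exists L : {poly Qq}, is_qOrder (<=%O : rel P^d) L) /\
  (forall Z L : {poly Qq},
     is_qZeta (@JP_le d P) (@JP_rk d P) Z ->
     is_qOrder (<=%O : rel P^d) L ->
     Z \Po (1 + qq *: 'X) = L).
Proof.
have [p [_ p_chains]] := multichain_sum_qexp (@JP_le_refl d P) (@JP_rk_lt d P) (ideal0 P).
have chains_eq n : \sum_(t : n.-tuple (JP P) | sorted (@JP_le d P) t)
    qq ^+ (\sum_(I <- t) JP_rk I) = p.[qq ^+ n].
  by rewrite -p_chains; apply: eq_bigl => t; rewrite path_ideal0.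
pose L := p \Po (1 + (qq - 1) *: 'X).
have L_qint n : L.[qint n] = p.[qq ^+ n].
  by rewrite horner_comp hornerD hornerC hornerZ hornerX -expr_qqE.
have L_order : is_qOrder (<=%O : rel P^d) L.
  by move=> n; rewrite L_qint -chains_eq; exact/esym/order_preserving_sum.
have Z_zeta : is_qZeta (@JP_le d P) (@JP_rk d P) (L \Po (qq^-1 *: ('X - 1))).
  move=> -[|n] // _; rewrite horner_comp hornerZ hornerD hornerN hornerC hornerX.
  by rewrite qintS addrC addKr mulKf ?qq_neq0 // L_qint chains_eq.
split; [by exists (L \Po (qq^-1 *: ('X - 1))) | split; [by exists L |]].
move=> Z L' Z_zeta' L'_order; apply/subr0_eq/(@inj_roots_poly_eq0 _ _ (qint \o succn)).
  by move=> i j /qint_inj [].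
move=> n; rewrite /root hornerD hornerN horner_comp_qint Z_zeta' // L'_order /=.
by rewrite order_preserving_sum subrr.
Qed.
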